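(* Let $h,w\ge 4$ and $G=C_w(U)\sqcap C_h$ with $U=\{i\}$ for some $i\in\{1,\dots,w\}$. Then $Z(G)\le h+2$.
   Context: All graphs are finite, simple and undirected. Zero forcing: given a graph $G$ and a set $S\subseteq V(G)$ of initially filled vertices, the color change rule says that if a filled vertex $v$ has exactly one unfilled neighbor $u$, then $v$ forces $u$ to become filled. $S$ is a zero forcing set if repeatedly applying this rule eventually fills every vertex of $G$. The zero forcing number $Z(G)$ is the minimum cardinality of a zero forcing set of $G$. The cycle $C_n$ ($n\ge3$) has vertex set $\{1,\dots,n\}$ and edges $\{k,k+1\}$ for $1\le k\le n-1$ together with $\{n,1\}$. Generalized hierarchical product: for graphs $W,H$ and $U\subseteq V(W)$ (the root set), $W(U)\sqcap H$ is the graph with vertex set $V(W)\times V(H)$ in which $(x_1,y_1)$ and $(x_2,y_2)$ are adjacent iff either ($x_1=x_2\in U$ and $y_1y_2\in E(H)$) or ($y_1=y_2$ and $x_1x_2\in E(W)$). *)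

From mathcomp Require Import all_boot.
From Stdlib Require Import ClassicalEpsilon.
Set Implicit Arguments. Unset Strict Implicit. Unset Printing Implicit Defensive.

Section ZF.
Variable T : finType.
Variable e : rel T.

Definition forces (F : {set T}) (v u : T) : bool :=
  [&& v \in F, u \notin F, e v u &
      [forall x, (e v x && (x \notin F)) ==> (x == u)]].

Inductive zf_reach : {set T} -> {set T} -> Prop :=
| zf_refl F : zf_reach F F
| zf_step F v u F' : forces F v u -> zf_reach (u |: F) F' -> zf_reach F F'.

Definition zero_forcing_set (S : {set T}) : Prop := zf_reach S setT.

Lemma setT_zero_forcing : zero_forcing_set setT.
Proof. exact: zf_refl. Qed.

Definition zero_forcing_setb (S : {set T}) : bool :=
  if excluded_middle_informative (zero_forcing_set S) then true else false.

Definition zero_forcing_number : nat :=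
  #|[arg min_(S < setT | zero_forcing_setb S) #|S|]|.
End ZF.

(* cycle C_n on 'I_n (vertex k+1 of the paper is k here): k ~ k+1 mod n *)
Definition cycle_rel (n : nat) : rel 'I_n :=
  fun a b => (3 <= n) && ((b == (a.+1 %% n) :> nat) || (a == (b.+1 %% n) :> nat)).

Definition hprod_rel (A B : finType) (eW : rel A) (U : {set A}) (eH : rel B)
  : rel (A * B) :=
  fun p q => ((p.1 == q.1) && (p.1 \in U) && eH p.2 q.2)
          || ((p.2 == q.2) && eW p.1 q.1).

From mathcomp Require Import all_boot.
From mathcomp Require Import zify.
From Stdlib Require Import ClassicalEpsilon.
Set Implicit Arguments. Unset Strict Implicit. Unset Printing Implicit Defensive.

(* Take as seed the whole copy of C_h over the neighbour i+1 of the root i,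
   together with (i,0) and (i,1): h + 2 vertices.  Off the root column every
   vertex has degree 2 inside its row, so a row in which (i,k) and (i+1,k)
   are filled is filled by forcing once around the row cycle.  This fills
   rows 0 and 1; once rows 0..k are filled, (i,k) has (i,k+1) as its only
   unfilled neighbour, and induction on k fills everything. *)

Section ZeroForcing.
Variables (T : finType) (e : rel T).

Lemma zero_forcing_setS (S1 S2 : {set T}) :
  S1 \subset S2 -> zero_forcing_set e S1 -> zero_forcing_set e S2.
Proof.
rewrite /zero_forcing_set => + zfS1; move: zfS1 S2; move Efull: setT => G zfS1.
elim: zfS1 Efull => {S1 G} [F <- S2 | F v u G fvu _ IH fullG S2] sFS2.
  by move: sFS2; rewrite subTset => /eqP ->; apply: zf_refl.
have [uS2 | uS2] := boolP (u \in S2).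
  by apply: IH => //; rewrite subUset sub1set uS2.
move: fvu => /and4P[vF _ evu /forallP vF_nbrs].
apply: (@zf_step _ _ _ v u); last by apply: IH => //; apply: setUS.
apply/and4P; split => //; first exact: (subsetP sFS2).
apply/forallP => x; apply/implyP => /andP[evx xS2].
by apply: (implyP (vF_nbrs x)); rewrite evx (contra (subsetP sFS2 x)).
Qed.

Lemma zero_forcing_set_force (F : {set T}) v u :
  v \in F -> e v u -> (forall x, e v x -> x != u -> x \in F) ->
  zero_forcing_set e (u |: F) -> zero_forcing_set e F.
Proof.
move=> vF evu vF_nbrs zfuF.
have [uF | uF] := boolP (u \in F).
  by apply: (zero_forcing_setS _ zfuF); rewrite subUset sub1set uF subxx.
apply: (@zf_step _ _ _ v u) => //; apply/and4P; split => //.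
apply/forallP => x; apply/implyP => /andP[evx xF].
by apply: contraR xF; apply: vF_nbrs.
Qed.

Lemma zero_forcing_number_le (S : {set T}) :
  zero_forcing_set e S -> zero_forcing_number e <= #|S|.
Proof.
have zfb P : zero_forcing_set e P -> zero_forcing_setb e P.
  by rewrite /zero_forcing_setb; case: excluded_middle_informative.
move=> zfS; rewrite /zero_forcing_number.
case: arg_minnP => [|A _]; first by apply: zfb; apply: setT_zero_forcing.
by apply; apply: zfb.
Qed.

End ZeroForcing.

Section Cycle.
Variable n : nat.
Implicit Types a b : 'I_n.

Lemma cycle_relE a b : cycle_rel a b = (3 <= n) && ((b == ordS a) || (a == ordS b)).
Proof. by []. Qed.

Lemma cycle_rel_ordS a : 3 <= n -> cycle_rel a (ordS a).
Proof. by rewrite cycle_relE eqxx => ->. Qed.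

Lemma cycle_rel_nbr a b : cycle_rel a b -> b = ordS a \/ b = ord_pred a.
Proof.
rewrite cycle_relE => /andP[_ /orP[/eqP | /eqP ->]]; first by left.
by right; rewrite ordSK.
Qed.

Lemma ltn_ordS b : 0 < ordS b -> b < ordS b.
Proof.
rewrite /=; case: (ltnP b.+1 n) => [lt_bn | le_nb]; first by rewrite modn_small.
have -> : b.+1 = n by apply/eqP; rewrite eqn_leq le_nb ltn_ord.
by rewrite modnn.
Qed.

Lemma iter_ordS_val a m : iter m (@ordS n) a = (a + m) %% n :> nat.
Proof.
elim: m => [|m IH]; first by rewrite addn0 modn_small.
by rewrite iterS /= IH -addn1 modnDml addn1 addnS.
Qed.

Lemma iter_ordS_neq a m : 0 < m < n -> iter m (@ordS n) a != a.
Proof.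
case/andP=> m_gt0 m_lt_n; apply/eqP => /(congr1 (@nat_of_ord n)).
rewrite iter_ordS_val -{2}(modn_small (ltn_ord a)) -{2}[val a]addn0 => /eqP.
by rewrite eqn_modDl mod0n modn_small // => /eqP m0; rewrite m0 in m_gt0.
Qed.

Lemma iter_ordS_onto a b : exists2 m, m < n & b = iter m (@ordS n) a.
Proof.
have n_gt0 : 0 < n by apply: leq_ltn_trans (ltn_ord a).
exists ((b + (n - a)) %% n); first exact: ltn_pmod.
apply: ord_inj; rewrite iter_ordS_val modnDmr addnCA subnKC ?modnDr ?modn_small //.
exact: ltnW.
Qed.

End Cycle.

Lemma hprod_rel_offU (A B : finType) (eW : rel A) (U : {set A}) (eH : rel B)
    (p q : A * B) :
  p.1 \notin U -> hprod_rel eW U eH p q = (p.2 == q.2) && eW p.1 q.1.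
Proof. by rewrite /hprod_rel => /negbTE ->; rewrite andbF. Qed.

Section CycleProduct.
Variables (w h : nat) (i : 'I_w).
Hypotheses (w_ge3 : 3 <= w) (h_ge3 : 3 <= h).

Let T := ('I_w * 'I_h)%type.
Let E := hprod_rel (@cycle_rel w) [set i] (@cycle_rel h).
Let row (k : 'I_h) : {set T} := [set p : T | p.2 == k].
Let rows_upto (k : nat) : {set T} := [set p : T | p.2 <= k].
Let col : {set T} := [set (ordS i, b) | b : 'I_h].

Lemma row_fill_from (k : 'I_h) m (F : {set T}) : 0 < m < w ->
  (forall j, j <= m -> (iter j (@ordS w) i, k) \in F) ->
  zero_forcing_set E (F :|: row k) -> zero_forcing_set E F.
Proof.
move=> /andP[m_gt0 m_lt_w]; move Hn: (w.-1 - m) => n.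
elim: n m F m_gt0 m_lt_w Hn => [|n IH] m F m_gt0 m_lt_w Hn rowF.
  have row_subF : row k \subset F.
    apply/subsetP => -[a b]; rewrite inE /= => /eqP ->.
    by have [j j_lt_w ->] := iter_ordS_onto i a; apply: rowF; lia.
  by rewrite (setUidPl row_subF).
have offU : iter m (@ordS w) i \notin [set i] by rewrite inE iter_ordS_neq ?m_gt0.
move=> zfF.
apply: (@zero_forcing_set_force _ _ _ (iter m (@ordS w) i, k) (iter m.+1 (@ordS w) i, k)).
- exact: rowF.
- by rewrite /E hprod_rel_offU //= eqxx cycle_rel_ordS.
- move=> [a b]; rewrite /E hprod_rel_offU //= => /andP[/eqP <-].
  case/cycle_rel_nbr => ->; first by rewrite eqxx.
  by rewrite -(prednK m_gt0) iterS ordSK => _; apply: rowF; lia.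
- apply: (IH m.+1); [lia | lia | lia | | ].
    move=> j; rewrite leq_eqVlt ltnS => /orP[/eqP -> | j_le_m].
      by rewrite setU11.
    by rewrite setU1r ?rowF.
  by apply: (zero_forcing_setS _ zfF); rewrite setSU // subsetUr.
Qed.

Lemma row_fill (k : 'I_h) (F : {set T}) :
  (i, k) \in F -> (ordS i, k) \in F ->
  zero_forcing_set E (F :|: row k) -> zero_forcing_set E F.
Proof.
move=> ikF iSkF; apply: (@row_fill_from k 1); first by rewrite /= (leq_trans _ w_ge3).
by case=> [|[|//]].
Qed.

Lemma rows_step (k : 'I_h) : 0 < k -> k.+1 < h ->
  zero_forcing_set E (col :|: rows_upto k.+1) -> zero_forcing_set E (col :|: rows_upto k).
Proof.
move=> k_gt0 k_lt_h zf; have Sk : ordS k = k.+1 :> nat by rewrite /= modn_small.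
apply: (@zero_forcing_set_force _ _ _ (i, k) (i, ordS k)).
- by rewrite !inE leqnn orbT.
- by rewrite /E /hprod_rel /= eqxx set11 cycle_rel_ordS.
- move=> [a b]; rewrite /E /hprod_rel /= inE.
  case/orP=> [/andP[/andP[/eqP <- _]] | /andP[/eqP <- _]].
    rewrite cycle_relE => /andP[_ /orP[/eqP -> | /eqP k_eq]]; first by rewrite eqxx.
    by move=> _; rewrite !inE /= ltnW ?orbT // k_eq ltn_ordS // -k_eq.
  by move=> _; rewrite !inE leqnn orbT.
- apply: (@row_fill (ordS k)); [by rewrite setU11 | by rewrite !inE imset_f ?orbT |].
  apply: (zero_forcing_setS _ zf); apply/subsetP => -[a b].
  rewrite !inE /= leq_eqVlt ltnS -Sk => /orP[-> | /orP[/eqP/ord_inj -> | ->]];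
    by rewrite ?eqxx ?orbT.
Qed.

Lemma rows_zero_forcing k : 0 < k < h -> zero_forcing_set E (col :|: rows_upto k).
Proof.
move=> /andP[k_gt0 k_lt_h]; move Hn: (h.-1 - k) => n.
elim: n k k_gt0 k_lt_h Hn => [|n IH] k k_gt0 k_lt_h Hn.
  apply: (zero_forcing_setS _ (setT_zero_forcing _)); apply/subsetP => -[a b] _.
  by apply/setUP; right; rewrite inE /=; have := ltn_ord b; lia.
apply: (@rows_step (Ordinal k_lt_h)) => //=; first lia.
apply: IH; lia.
Qed.

Lemma seed_zero_forcing (k0 : 'I_h) : k0 = 0 :> nat ->
  zero_forcing_set E (col :|: [set (i, k0); (i, ordS k0)]).
Proof.
move=> k0_eq0; have Sk0 : ordS k0 = 1 :> nat by rewrite /= k0_eq0 modn_small // ltnW.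
apply: (@row_fill k0); [by rewrite !inE eqxx ?orbT | by rewrite !inE imset_f |].
apply: (@row_fill (ordS k0)); [by rewrite !inE eqxx ?orbT | by rewrite !inE imset_f |].
apply: (zero_forcing_setS _ (@rows_zero_forcing 1 _)); last by rewrite /= ltnW.
apply/subsetP => -[a b]; rewrite !inE /= leq_eqVlt ltnS leqn0 -Sk0 -k0_eq0.
by case/orP=> [-> | /orP[/eqP/ord_inj -> | /eqP/ord_inj ->]]; rewrite ?eqxx ?orbT.
Qed.

Lemma zero_forcing_number_cycle_hprod : zero_forcing_number E <= h + 2.
Proof.
have h_gt0 : 0 < h by apply: leq_trans h_ge3.
apply: leq_trans (zero_forcing_number_le (@seed_zero_forcing (Ordinal h_gt0) erefl)) _.
apply: leq_trans (leq_card_setU _ _) _; apply: leq_add; last first.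
  by rewrite cards2; case: (_ != _).
by apply: leq_trans (leq_imset_card _ _) _; rewrite card_ord.
Qed.

End CycleProduct.

Theorem mainTheorem4 (w h : nat) (i : 'I_w) :
  4 <= w -> 4 <= h ->
  zero_forcing_number (hprod_rel (@cycle_rel w) [set i] (@cycle_rel h)) <= h + 2.
Proof. by move=> /ltnW w_ge3 /ltnW h_ge3; apply: zero_forcing_number_cycle_hprod. Qed.
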